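(* Let $k\ge0$, $T\in\mathcal T_h$, and let $\mathrm s_T$ be a bilinear form on $\underline U_T^k$ satisfying (S1)–(S3) and depending on its arguments only through the residuals $\delta_T^k$ and $(\delta_{TF}^k)_{F\in\mathcal F_T}$, i.e. $\mathrm s_T(\underline u_T,\underline v_T)=\mathrm s_T(\underline u_T',\underline v_T')$ whenever $\delta_T^k\underline u_T=\delta_T^k\underline u_T'$, $\delta_{TF}^k\underline u_T=\delta_{TF}^k\underline u_T'$, $\delta_T^k\underline v_T=\delta_T^k\underline v_T'$, $\delta_{TF}^k\underline v_T=\delta_{TF}^k\underline v_T'$ for all $F\in\mathcal F_T$. Then for all $\underline u_T,\underline v_T\in\underline U_T^k$, $$\mathrm s_T(\underline u_T,\underline v_T)=\mathrm s_T\big((0,\Delta_{\partial T}^k\underline u_T),(0,\Delta_{\partial T}^k\underline v_T)\big).$$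
   Context: $T$ is an element (open polytope) of a polytopal mesh of a bounded polyhedral domain $\Omega\subset\mathbb R^d$, $\mathcal F_T$ the set of its (planar) faces, $\vec n_{TF}$ the unit normal to $F$ pointing out of $T$, $h_T,h_F$ diameters. $\mathbb P^l(X)$: polynomials of total degree $\le l$ on $X$; $(\cdot,\cdot)_X$, $\|\cdot\|_X$: $L^2(X)$ product and norm; $\pi_X^{0,l}$: $L^2(X)$-orthogonal projector onto $\mathbb P^l(X)$. $\underline U_T^k:=\mathbb P^k(T)\times\prod_{F\in\mathcal F_T}\mathbb P^k(F)$ with elements $\underline v_T=(v_T,(v_F)_{F\in\mathcal F_T})$; $\|\underline v_T\|_{1,T}^2:=\|\nabla v_T\|_T^2+\sum_Fh_F^{-1}\|v_F-v_T\|_F^2$; $\underline I_T^kv:=(\pi_T^{0,k}v,(\pi_F^{0,k}v|_F)_F)$. $p_T^{k+1}:\underline U_T^k\to\mathbb P^{k+1}(T)$ is defined by $(\nabla p_T^{k+1}\underline v_T,\nabla w)_T=-(v_T,\Delta w)_T+\sum_F(v_F,\nabla w\cdot\vec n_{TF})_F$ for all $w\in\mathbb P^{k+1}(T)$ and $(p_T^{k+1}\underline v_T-v_T,1)_T=0$. $\mathrm a_T(\underline u_T,\underline v_T):=(\nabla p_T^{k+1}\underline u_T,\nabla p_T^{k+1}\underline v_T)_T+\mathrm s_T(\underline u_T,\underline v_T)$. (S1) $\mathrm s_T$ symmetric positive semidefinite; (S2) there is $\eta>0$ with $\eta^{-1}\|\underline v_T\|_{1,T}^2\le\mathrm a_T(\underline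 v_T,\underline v_T)\le\eta\|\underline v_T\|_{1,T}^2$ for all $\underline v_T$; (S3) $\mathrm s_T(\underline I_T^kw,\underline v_T)=0$ for all $w\in\mathbb P^{k+1}(T)$, $\underline v_T\in\underline U_T^k$. Residuals: $\delta_T^k\underline v_T:=\pi_T^{0,k}(p_T^{k+1}\underline v_T-v_T)$ and $\delta_{TF}^k\underline v_T:=\pi_F^{0,k}(p_T^{k+1}\underline v_T-v_F)$ for $F\in\mathcal F_T$. Boundary difference operator $\Delta_{\partial T}^k:\underline U_T^k\to\prod_{F\in\mathcal F_T}\mathbb P^k(F)$, $\Delta_{\partial T}^k\underline v_T:=(v_F-v_T|_F)_{F\in\mathcal F_T}$; $(0,\Delta_{\partial T}^k\underline v_T)$ denotes the element of $\underline U_T^k$ with element component $0$ and face components $v_F-v_T|_F$. *)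

From HB Require Import structures.
From mathcomp Require Import all_boot all_order all_algebra.
From mathcomp Require Import all_classical all_reals all_analysis.
Set Implicit Arguments. Unset Strict Implicit. Unset Printing Implicit Defensive.
Import Order.TTheory GRing.Theory Num.Theory.
Import numFieldNormedType.Exports.
Local Open Scope classical_set_scope.
Local Open Scope ring_scope.

Definition edot {R : realType} {m : nat} (x y : 'rV[R]_m) : R :=
  \sum_(i < m) x 0 i * y 0 i.
Definition enorm {R : realType} {m : nat} (x : 'rV[R]_m) : R :=
  Num.sqrt (edot x x).
Definition diam {R : realType} {m : nat} (S : set 'rV[R]_m) : R :=
  sup [set enorm (x - y) | x in S & y in S].

(* ---------- Lebesgue integral on R^m, as iterated 1D Lebesgue integrals
   (coincides with the m-dimensional Lebesgue integral for integrable
   functions, by Fubini) ---------- *)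
Fixpoint iint {R : realType} (m : nat) : ('rV[R]_m -> R) -> R :=
  match m with
  | 0 => fun f => f 0
  | m'.+1 => fun f =>
      Rintegral (@lebesgue_measure R) [set: R]
        (fun t : R => iint (fun y : 'rV[R]_m' => f (row_mx (t%:M : 'rV[R]_1) y)))
  end.

Definition poly_fun {R : realType} (m l : nat) (f : 'rV[R]_m -> R) : Prop :=
  exists c : {ffun {ffun 'I_m -> 'I_l.+1} -> R},
    forall x, f x = \sum_(al : {ffun 'I_m -> 'I_l.+1} | (\sum_i (al i : nat) <= l)%N)
                      c al * \prod_(i < m) x 0 i ^+ al i.

Definition evec {R : realType} {m : nat} (i : 'I_m) : 'rV[R]_m := delta_mx 0 i.
Definition partial {R : realType} {m : nat} (i : 'I_m) (f : 'rV[R]_m -> R)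
  : 'rV[R]_m -> R := fun x => derive f x (evec i).
Definition grad {R : realType} {m : nat} (f : 'rV[R]_m -> R) (x : 'rV[R]_m)
  : 'rV[R]_m := \row_i partial i f x.
Definition lap {R : realType} {m : nat} (f : 'rV[R]_m -> R) (x : 'rV[R]_m) : R :=
  \sum_(i < m) partial i (partial i f) x.

(* ---------- a polytopal element T with its faces ----------
   Face i is a subset [fset i] of the affine hyperplane
   { forig i + y *m fframe i | y in R^(d-1) }, where the rows of [fframe i]
   are orthonormal and [fnormal i] is a unit normal to the hyperplane. *)
Record element (R : realType) (d : nat) := Element {
  cell : set 'rV[R]_d;
  nf : nat;
  forig : 'I_nf -> 'rV[R]_d;
  fframe : 'I_nf -> 'M[R]_(d.-1, d);
  fnormal : 'I_nf -> 'rV[R]_d;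
  fset : 'I_nf -> set 'rV[R]_d
}.
Arguments cell {R d} e _.
Arguments nf {R d} e.
Arguments forig {R d} e i.
Arguments fframe {R d} e i.
Arguments fnormal {R d} e i.
Arguments fset {R d} e i _.

Section Element.
Context {R : realType} {d : nat} (E : element R d).
Local Notation pt := 'rV[R]_d.
Local Notation T := (cell E).
Local Notation F := (fset E).

Definition fplane (i : 'I_(nf E)) : set pt :=
  [set forig E i + y *m fframe E i | y in [set: 'rV[R]_d.-1]].

Definition frelint (i : 'I_(nf E)) : set pt :=
  [set x | exists2 e : R, 0 < e &
     forall y : 'rV[R]_d.-1, enorm y < e -> F i (x + y *m fframe E i)].

Definition polytopal_element : Prop :=
  (0 < d)%N /\
  [/\ [/\ open T, T !=set0, connected T &
          exists M : R, forall x, T x -> enorm x <= M],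
      forall i, [/\ fframe E i *m (fframe E i)^T = 1%:M,
                    fframe E i *m (fnormal E i)^T = 0,
                    edot (fnormal E i) (fnormal E i) = 1 &
                    [/\ F i `<=` fplane i, closed (F i), connected (F i) &
                        frelint i !=set0]],
      closure T `\` T = \bigcup_(i in [set: 'I_(nf E)]) F i,
      (forall i j, i != j -> frelint i `&` frelint j = set0) &
      (forall i x, frelint i x -> exists2 e : R, 0 < e &
         forall y, enorm (y - x) < e ->
           (T y <-> edot (y - x) (fnormal E i) < 0))].

(* L^2 products on T and on a face F (w.r.t. the (d-1)-dim. surface measure,
   realised through the isometric parametrisation of the face hyperplane) *)
Definition intT (f : pt -> R) : R := iint (fun x => \1_T x * f x).
Definition intF (i : 'I_(nf E)) (f : pt -> R) : R :=
  iint (fun y : 'rV[R]_d.-1 =>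
          let x := forig E i + y *m fframe E i in \1_(F i) x * f x).

Definition hT : R := diam T.
Definition hF (i : 'I_(nf E)) : R := diam (F i).

(* L^2-orthogonal projectors; elements of P^l(X) are represented by
   polynomial functions on R^d, and are only meaningful on X. *)
Definition is_projT (l : nat) (f g : pt -> R) : Prop :=
  poly_fun l g /\ forall q, poly_fun l q -> intT (fun x => (f x - g x) * q x) = 0.
Definition is_projF (i : 'I_(nf E)) (l : nat) (f g : pt -> R) : Prop :=
  poly_fun l g /\ forall q, poly_fun l q -> intF i (fun x => (f x - g x) * q x) = 0.
Definition projT (l : nat) (f : pt -> R) : pt -> R :=
  xget (fun _ => 0) [set g | is_projT l f g].
Definition projF (i : 'I_(nf E)) (l : nat) (f : pt -> R) : pt -> R :=
  xget (fun _ => 0) [set g | is_projF i l f g].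

(* The HHO space U_T^k: pairs (v_T, (v_F)_F); face components are represented
   by polynomial functions on R^d, only their values on F matter. *)
Definition hho : Type := ((pt -> R) * ('I_(nf E) -> pt -> R))%type.
Definition inU (k : nat) (v : hho) : Prop :=
  poly_fun k v.1 /\ forall i, poly_fun k (v.2 i).
Definition hho_add (u v : hho) : hho :=
  (fun x => u.1 x + v.1 x, fun i x => u.2 i x + v.2 i x).
Definition hho_scale (a : R) (u : hho) : hho :=
  (fun x => a * u.1 x, fun i x => a * u.2 i x).

Definition interp (k : nat) (v : pt -> R) : hho :=
  (projT k v, fun i => projF i k v).

Definition is_pT (k : nat) (v : hho) (p : pt -> R) : Prop :=
  [/\ poly_fun k.+1 p,
      forall w, poly_fun k.+1 w ->
        intT (fun x => edot (grad p x) (grad w x)) =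
        - intT (fun x => v.1 x * lap w x)
        + \sum_(i < nf E) intF i (fun x => v.2 i x * edot (grad w x) (fnormal E i)) &
      intT (fun x => p x - v.1 x) = 0].
Definition pT (k : nat) (v : hho) : pt -> R := xget (fun _ => 0) [set p | is_pT k v p].

Definition deltaT (k : nat) (v : hho) : pt -> R :=
  projT k (fun x => pT k v x - v.1 x).
Definition deltaTF (k : nat) (i : 'I_(nf E)) (v : hho) : pt -> R :=
  projF i k (fun x => pT k v x - v.2 i x).

Definition bdiff (v : hho) : 'I_(nf E) -> pt -> R := fun i x => v.2 i x - v.1 x.
Definition zero_bdiff (v : hho) : hho := (fun _ => 0, bdiff v).

Definition norm1T_sq (v : hho) : R :=
  intT (fun x => edot (grad v.1 x) (grad v.1 x)) +
  \sum_(i < nf E) (hF i)^-1 * intF i (fun x => (v.2 i x - v.1 x) ^+ 2).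

Definition aT (k : nat) (s : hho -> hho -> R) (u v : hho) : R :=
  intT (fun x => edot (grad (pT k u) x) (grad (pT k v) x)) + s u v.

Definition bilinear_on (k : nat) (s : hho -> hho -> R) : Prop :=
  (forall a u u' v, inU k u -> inU k u' -> inU k v ->
     s (hho_add (hho_scale a u) u') v = a * s u v + s u' v) /\
  (forall a u v v', inU k u -> inU k v -> inU k v' ->
     s u (hho_add (hho_scale a v) v') = a * s u v + s u v').

Definition S1 (k : nat) (s : hho -> hho -> R) : Prop :=
  (forall u v, inU k u -> inU k v -> s u v = s v u) /\
  (forall v, inU k v -> 0 <= s v v).
Definition S2 (k : nat) (s : hho -> hho -> R) : Prop :=
  exists2 eta : R, 0 < eta & forall v, inU k v ->
    eta^-1 * norm1T_sq v <= aT k s v v /\ aT k s v v <= eta * norm1T_sq v.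
Definition S3 (k : nat) (s : hho -> hho -> R) : Prop :=
  forall w v, poly_fun k.+1 w -> inU k v -> s (interp k w) v = 0.

Definition same_residuals (k : nat) (u u' : hho) : Prop :=
  (forall x, T x -> deltaT k u x = deltaT k u' x) /\
  (forall i x, F i x -> deltaTF k i u x = deltaTF k i u' x).
Definition residual_dependent (k : nat) (s : hho -> hho -> R) : Prop :=
  forall u u' v v', inU k u -> inU k u' -> inU k v -> inU k v' ->
    same_residuals k u u' -> same_residuals k v v' -> s u v = s u' v'.

End Element.

From HB Require Import structures.
From mathcomp Require Import all_boot all_order all_algebra.
From mathcomp Require Import all_classical all_reals all_analysis.
From mathcomp Require Import lra.
Set Implicit Arguments.
Unset Strict Implicit.
Unset Printing Implicit Defensive.
Import Order.TTheory GRing.Theory Num.Theory.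
Import numFieldNormedType.Exports.
Local Open Scope classical_set_scope.
Local Open Scope ring_scope.

(* Write u = (u_T, (u_T)_F) + (0, Delta u).  The first summand has the
   residuals of the interpolate I_T^k u_T of the polynomial u_T, since the
   L^2-projections onto P^k(T) and P^k(F) fix u_T on T and on each face F; by
   residual dependence and (S3), s_T vanishes on it, on either side by symmetry.
   The projections fix polynomials because the L^2 products are definite on
   polynomials: if int_T q^2 = 0 then q vanishes on the open set T; if
   int_F q^2 = 0 and q x <> 0 for some x in F, then q, a univariate polynomial
   along the segment from a relative-interior point x0 of F to x, is nonzero at
   points of the segment arbitrarily close to x0, where F contains a relative
   ball. *)

Section IteratedIntegralBounds.
Variable R : realType.
Local Notation leb := (@lebesgue_measure R).

(* No measurability is needed: [ge0_integralTE] writes the integral of a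
   nonnegative function as a supremum over the simple functions below it. *)
Lemma ge0_le_integralT (f g : R -> \bar R) :
  (forall x, (0 <= f x)%E) -> (forall x, (f x <= g x)%E) ->
  (\int[leb]_x f x <= \int[leb]_x g x)%E.
Proof.
move=> f0 fg; have g0 x : (0 <= g x)%E by apply: le_trans (f0 x) (fg x).
rewrite !ge0_integralTE //; apply: ereal_sup_le => _ [h hf <-].
by exists h => //= x; exact: le_trans (hf x) (fg x).
Qed.

Lemma integral_scale_indic_itv (c a b : R) : 0 <= c -> a <= b ->
  (\int[leb]_x (c * \1_`[a, b] x)%:E = (c * (b - a))%:E)%E.
Proof.
move=> c0 ab.
rewrite (@integralZl_indic _ _ _ leb setT measurableT (fun=> `[a, b]%classic)) //;
  last by move=> /lt_le_trans /(_ c0); rewrite ltxx.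
rewrite integral_indic // setIT /= (lebesgue_measure_itv `[a, b]) /=.
case: ifPn => [_|]; first by rewrite -EFinM.
rewrite lte_fin -leNgt => ba; have -> : b = a by apply/eqP; rewrite eq_le ab ba.
by rewrite subrr mulr0 mule0.
Qed.

(* Both bounds matter: the upper one guarantees that [Rintegral] is not the
   junk value [fine +oo = 0]. *)
Lemma Rintegral_box_bounds (g : R -> R) (K L c a del : R) :
  0 <= c -> 0 <= del -> 0 <= L ->
  (forall t, 0 <= g t) -> (forall t, g t <= K) ->
  (forall t, L < `|t| -> g t = 0) ->
  (forall t, a <= t <= a + del -> c <= g t) ->
  c * del <= Rintegral leb setT g <= K * (L *+ 2).
Proof.
move=> c0 d0 L0 g0 gK gL gc.
have K0 : 0 <= K by apply: le_trans (g0 0) (gK 0).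
have lo : ((c * del)%:E <= \int[leb]_x (g x)%:E)%E.
  have /(integral_scale_indic_itv c0) : a <= a + del by rewrite lerDl.
  rewrite addrAC subrr add0r => <-.
  apply: ge0_le_integralT => x; first by rewrite lee_fin mulr_ge0 // indicE.
  rewrite lee_fin indicE; have [xin|_] := boolP (x \in _); last by rewrite mulr0.
  by move: xin; rewrite mulr1 inE /= in_itv /= => /gc.
have hi : (\int[leb]_x (g x)%:E <= (K * (L *+ 2))%:E)%E.
  have LL : - L <= L by rewrite -subr_ge0 opprK -mulr2n mulrn_wge0.
  have := integral_scale_indic_itv K0 LL; rewrite opprK -mulr2n => <-.
  apply: ge0_le_integralT => x; first by rewrite lee_fin.
  rewrite lee_fin indicE; have [xin|xnin] := boolP (x \in _); first by rewrite mulr1.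
  move: xnin; rewrite mulr0 => /negP; rewrite inE /= in_itv /= -ler_norml => /negP.
  by rewrite -ltNge => /gL ->.
have int0 : (0 <= \int[leb]_x (g x)%:E)%E.
  by apply: le_trans lo; rewrite lee_fin mulr_ge0.
have fin : (\int[leb]_x (g x)%:E)%E \is a fin_num.
  by rewrite ge0_fin_numE // (le_lt_trans hi) // ltry.
by rewrite /Rintegral -!lee_fin fineK // lo hi.
Qed.

Lemma iint0 m : iint (fun _ : 'rV[R]_m => 0) = 0.
Proof. by elim: m => [|m /= ->] //; rewrite /Rintegral integral0. Qed.

Lemma ord_split_ind m (P : 'I_(1 + m) -> Prop) :
  P (lshift m (ord0 : 'I_1)) -> (forall j, P (rshift 1 j)) -> forall i, P i.
Proof.
move=> h1 h2 i; rewrite -[i]splitK; case: (fintype.split i) => [j|j] /=.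
  by rewrite (ord1 j).
exact: h2.
Qed.

Lemma iint_box_bounds m (f : 'rV[R]_m -> R) (K L c del : R) (a : 'I_m -> R) :
  0 <= c -> 0 <= del -> 0 <= L ->
  (forall x, 0 <= f x) -> (forall x, f x <= K) ->
  (forall x : 'rV[R]_m, (exists i, L < `|x 0 i|) -> f x = 0) ->
  (forall x : 'rV[R]_m, (forall i, a i <= x 0 i <= a i + del) -> c <= f x) ->
  c * del ^+ m <= iint f <= K * (L *+ 2) ^+ m.
Proof.
elim: m f K c a => [|m IH] f K c a c0 d0 L0 f0 fK fL fc.
  by rewrite /= !expr0 !mulr1 fK fc // => -[].
pose fs t (y : 'rV[R]_m) := f (row_mx (t%:M : 'rV[R]_1) y).
have fs_first t y : (row_mx (t%:M : 'rV[R]_1) y) 0 (lshift m (ord0 : 'I_1)) = t.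
  by rewrite row_mxEl mxE eqxx mulr1n.
have fs_rest t y j : (row_mx (t%:M : 'rV[R]_1) y) 0 (rshift 1 j) = y 0 j.
  by rewrite row_mxEr.
pose g t := iint (fs t).
have g_bounds t c' a' : 0 <= c' ->
    (forall y : 'rV[R]_m, (forall i, a' i <= y 0 i <= a' i + del) -> c' <= fs t y) ->
    c' * del ^+ m <= g t <= K * (L *+ 2) ^+ m.
  move=> c'0 h; apply: (IH _ _ _ a') => // [y|y|y [j Hj]]; [exact: f0|exact: fK|].
  by apply: fL; exists (rshift 1 j); rewrite fs_rest.
have g0 t : 0 <= g t.
  by have /andP[+ _] := g_bounds t 0 (fun=> 0) (lexx _) (fun y _ => f0 _); rewrite mul0r.
have gK t : g t <= K * (L *+ 2) ^+ m.
  by have /andP[_ +] := g_bounds t 0 (fun=> 0) (lexx _) (fun y _ => f0 _).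
have gL t : L < `|t| -> g t = 0.
  move=> Lt; rewrite /g (_ : fs t = fun=> 0) ?iint0 //; apply/funext => y.
  by apply: fL; exists (lshift m (ord0 : 'I_1)); rewrite fs_first.
have := Rintegral_box_bounds (a := a (lshift m (ord0 : 'I_1)))
  (mulr_ge0 c0 (exprn_ge0 m d0)) d0 L0 g0 gK gL.
rewrite -!mulrA -!exprSr; apply => t ta.
have lb (y : 'rV[R]_m) :
    (forall i, a (rshift 1 i) <= y 0 i <= a (rshift 1 i) + del) -> c <= fs t y.
  move=> ya; apply: fc; apply: ord_split_ind; first by rewrite fs_first.
  by move=> j; rewrite fs_rest.
by case/andP: (g_bounds t c _ c0 lb).
Qed.

End IteratedIntegralBounds.

Section PolynomialFunctions.
Variable R : realType.

Lemma poly_fun0 m l : poly_fun l (fun _ : 'rV[R]_m => 0).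
Proof. by exists [ffun=> 0] => x; rewrite big1 // => al _; rewrite ffunE mul0r. Qed.

Lemma poly_funB m l (f g : 'rV[R]_m -> R) : poly_fun l f -> poly_fun l g ->
  poly_fun l (fun x => f x - g x).
Proof.
move=> [cf fE] [cg gE]; exists [ffun al => cf al - cg al] => x.
by rewrite fE gE -sumrB; apply: eq_bigr => al _; rewrite ffunE mulrBl.
Qed.

Lemma poly_funS m l (f : 'rV[R]_m -> R) : poly_fun l f -> poly_fun l.+1 f.
Proof.
move=> [c fE].
pose widen (al : {ffun 'I_m -> 'I_l.+1}) : {ffun 'I_m -> 'I_l.+2} :=
  [ffun i => widen_ord (leqnSn _) (al i)].
pose narrow (al : {ffun 'I_m -> 'I_l.+2}) : {ffun 'I_m -> 'I_l.+1} :=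
  [ffun i => inord (al i)].
have narrowK al : narrow (widen al) = al.
  by apply/ffunP => j; rewrite !ffunE; apply/val_inj => /=; rewrite inordK.
exists [ffun al : {ffun 'I_m -> 'I_l.+2} =>
  if (\sum_i (al i : nat) <= l)%N then c (narrow al) else 0] => x.
rewrite fE (bigID (fun al : {ffun 'I_m -> 'I_l.+2} => (\sum_i (al i : nat) <= l)%N)) /=.
rewrite [X in _ = _ + X]big1 ?addr0; last first.
  by move=> al /andP[_ /negbTE H]; rewrite ffunE H mul0r.
rewrite (eq_big (fun al : {ffun 'I_m -> 'I_l.+2} => (\sum_i (al i : nat) <= l)%N)
  (fun al : {ffun 'I_m -> 'I_l.+2} => c (narrow al) * \prod_(i < m) x 0 i ^+ al i));
  first last.
- by move=> al /andP[_ H]; rewrite ffunE H.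
- by move=> al /=; case: (leqP _ l) => [H|]; [rewrite (leq_trans H)|rewrite andbF].
rewrite (reindex_onto widen narrow) /=; last first.
  move=> al al_l; apply/ffunP => j; rewrite !ffunE; apply/val_inj => /=.
  rewrite inordK // ltnS; apply: leq_trans al_l.
  by rewrite (bigD1 j) //= leq_addr.
apply: eq_big => al; rewrite narrowK.
  by rewrite eqxx andbT; congr (_ <= _)%N; apply: eq_bigr => j _; rewrite ffunE.
by move=> _; congr (_ * _); apply: eq_bigr => j _; rewrite ffunE.
Qed.

Lemma poly_fun_bounded m l (q : 'rV[R]_m -> R) B : poly_fun l q -> 0 <= B ->
  exists K : R, forall x : 'rV[R]_m, (forall i, `|x 0 i| <= B) -> `|q x| <= K.
Proof.
move=> [c qE] B0.
exists (\sum_(al : {ffun 'I_m -> 'I_l.+1} | (\sum_i (al i : nat) <= l)%N)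
   `|c al| * \prod_(i < m) B ^+ al i) => x hx.
rewrite qE; apply: le_trans (ler_norm_sum _ _ _) _; apply: ler_sum => al _.
rewrite normrM normr_prod; apply: ler_wpM2l => //; apply: ler_prod => i _.
by rewrite normrX exprn_ge0 //= lerXn2r // nnegrE.
Qed.

Lemma poly_fun_line m l (q : 'rV[R]_m -> R) (A B : 'rV[R]_m) : poly_fun l q ->
  exists P : {poly R}, forall t, q (A + t *: B) = P.[t].
Proof.
move=> [c qE].
exists (\sum_(al : {ffun 'I_m -> 'I_l.+1} | (\sum_i (al i : nat) <= l)%N)
   c al *: \prod_(i < m) ((A 0 i)%:P + B 0 i *: 'X) ^+ al i) => t.
rewrite qE horner_sum; apply: eq_bigr => al _.
rewrite hornerZ horner_prod; congr (_ * _); apply: eq_bigr => i _.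
by rewrite horner_exp hornerD hornerC hornerZ hornerX !mxE mulrC.
Qed.

Section Continuity.
Variable T : topologicalType.

Lemma continuous_sum (I : Type) (r : seq I) (P : pred I) (F : I -> T -> R) (x : T) :
  (forall i, {for x, continuous (F i)}) ->
  {for x, continuous (fun t => \sum_(i <- r | P i) F i t)}.
Proof.
move=> Fc; rewrite -fct_sumE.
by apply: (big_ind (fun f => {for x, continuous f})) => // [|f g];
  [exact: cst_continuous|exact: continuousD].
Qed.

Lemma continuous_prod (I : Type) (r : seq I) (P : pred I) (F : I -> T -> R) (x : T) :
  (forall i, {for x, continuous (F i)}) ->
  {for x, continuous (fun t => \prod_(i <- r | P i) F i t)}.
Proof.
move=> Fc; rewrite -fct_prodE.
by apply: (big_ind (fun f => {for x, continuous f})) => // [|f g];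
  [exact: cst_continuous|exact: continuousM].
Qed.

Lemma continuous_exprn (F : T -> R) n (x : T) : {for x, continuous F} ->
  {for x, continuous (fun t => F t ^+ n)}.
Proof.
move=> Fc; rewrite (_ : (fun t => _) = fun t => \prod_(i < n) F t).
  exact: continuous_prod.
by apply/funext => t; rewrite prodr_const card_ord.
Qed.

Lemma poly_fun_comp_continuous m l (h : T -> 'rV[R]_m) (q : 'rV[R]_m -> R) (x : T) :
  (forall i, {for x, continuous (fun t => h t 0 i)}) -> poly_fun l q ->
  {for x, continuous (fun t => q (h t))}.
Proof.
move=> hc [c qE]; rewrite (_ : (fun t => _) = fun t =>
    \sum_(al : {ffun 'I_m -> 'I_l.+1} | (\sum_i (al i : nat) <= l)%N)
      c al * \prod_(i < m) h t 0 i ^+ al i).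
  apply: continuous_sum => al; apply: continuousM; first exact: cst_continuous.
  by apply: continuous_prod => i; exact: continuous_exprn.
by apply/funext => t; rewrite qE.
Qed.

End Continuity.
End PolynomialFunctions.

Section PositiveIntegral.
Variable R : realType.

Lemma nbhs_box m (A : set 'rV[R]_m) (x : 'rV[R]_m) : nbhs x A ->
  exists2 r : R, 0 < r &
    forall y : 'rV[R]_m, (forall i, `|y 0 i - x 0 i| <= r) -> A y.
Proof.
move=> /nbhs_ballP [e e0 he]; exists (e / 2); first by rewrite divr_gt0.
move=> y hy; apply: he; split => // i j; rewrite (ord1 i) -ball_normE /= distrC.
by apply: le_lt_trans (hy j) _; rewrite ltr_pdivrMr // ltr_pMr // ltr1n.
Qed.

Lemma continuous_box m (g : 'rV[R]_m -> R) (x : 'rV[R]_m) e :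
  {for x, continuous g} -> 0 < e ->
  exists2 r : R, 0 < r & forall y : 'rV[R]_m,
    (forall i, `|y 0 i - x 0 i| <= r) -> `|g y - g x| < e.
Proof.
move=> /cvgrPdist_lt /(_ e) gx e0; have /nbhs_box [r r0 hr] := gx e0.
by exists r => // y /hr; rewrite distrC.
Qed.

(* [p z <> 0] and continuity give [p^2 >= (|p z| / 2)^2] on a small box around
   [z]; boundedness of [S] and of [p] on [S] keep the integral finite. *)
Lemma iint_indic_sqr_gt0 m (S : set 'rV[R]_m) (p : 'rV[R]_m -> R) (B K : R)
    (z : 'rV[R]_m) :
  0 <= B -> (forall y, S y -> forall i, `|y 0 i| <= B) ->
  (forall y, S y -> `|p y| <= K) ->
  {for z, continuous p} -> p z != 0 ->
  (exists2 r : R, 0 < r &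
     forall y : 'rV[R]_m, (forall i, `|y 0 i - z 0 i| <= r) -> S y) ->
  0 < iint (fun y => \1_S y * (p y * p y)).
Proof.
move=> B0 SB pK pc pz [r2 r20 hr2].
pose e := `|p z| / 2.
have e0 : 0 < e by rewrite divr_gt0 // normr_gt0.
have [r1 r10 hr1] := continuous_box pc e0.
pose r := Num.min r1 r2.
have r0 : 0 < r by rewrite lt_min r10 r20.
have K0 : 0 <= K by apply: le_trans (pK z (hr2 z _)) => // i; rewrite subrr normr0 ltW.
have p2_ge0 y : 0 <= p y * p y by rewrite -expr2 sqr_ge0.
suff /andP[lb _] : e * e * (r *+ 2) ^+ m <= iint (fun y => \1_S y * (p y * p y))
    <= K * K * (B *+ 2) ^+ m.
  by apply: lt_le_trans lb; rewrite mulr_gt0 ?exprn_gt0 ?mulrn_wgt0 // mulr_gt0.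
apply: (@iint_box_bounds R m _ _ B _ _ (fun i => z 0 i - r)) => //.
- by rewrite mulr_ge0 // ltW.
- by rewrite mulrn_wge0 // ltW.
- move=> y; rewrite indicE; case: (y \in S); rewrite ?mul1r ?mul0r //.
- move=> y; rewrite indicE; have [/set_mem Sy|_] := boolP (y \in S).
    by rewrite mul1r (le_trans (ler_norm _)) // normrM ler_pM // pK.
  by rewrite mul0r mulr_ge0.
- move=> y [i Bi]; rewrite indicE; have [/set_mem Sy|_] := boolP (y \in S).
    by have := SB y Sy i; rewrite leNgt Bi.
  by rewrite mul0r.
move=> y yz.
have {}yz i : `|y 0 i - z 0 i| <= r.
  by have /andP[] := yz i; rewrite ler_norml => *; apply/andP; split; lra.
have r_r1 : r <= r1 by rewrite ge_min lexx.
have r_r2 : r <= r2 by rewrite ge_min lexx orbT.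
have Sy : S y by apply: hr2 => i; apply: le_trans (yz i) r_r2.
have := hr1 y (fun i => le_trans (yz i) r_r1).
have := ler_normD (p y) (p z - p y); rewrite addrC subrK distrC.
have pzE : `|p z| = e * 2 by rewrite /e divfK.
move=> h1 h2; have ey : e <= `|p y| by clearbody e; lra.
rewrite indicE mem_set // mul1r -[p y * p y]ger0_norm // normrM.
by apply: ler_pM => //; apply: ltW.
Qed.

End PositiveIntegral.

Section EuclideanNorm.
Variable R : realType.

Lemma enorm0 m : enorm (0 : 'rV[R]_m) = 0.
Proof. by rewrite /enorm /edot big1 ?sqrtr0 // => i _; rewrite mxE mul0r. Qed.

Lemma coord_le_enorm m (x : 'rV[R]_m) i : `|x 0 i| <= enorm x.
Proof.
rewrite /enorm -sqrtr_sqr ler_wsqrtr // /edot (bigD1 i) //= expr2 lerDl.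
by apply: sumr_ge0 => j _; rewrite -expr2 sqr_ge0.
Qed.

Lemma enorm_le_l1 m (x : 'rV[R]_m) : enorm x <= \sum_i `|x 0 i|.
Proof.
have S0 : 0 <= \sum_i `|x 0 i| by apply: sumr_ge0.
rewrite -(ger0_norm S0) -sqrtr_sqr ler_wsqrtr // expr2 {1}/edot mulr_suml.
apply: ler_sum => i _; apply: le_trans (ler_norm _) _; rewrite normrM.
by apply: ler_wpM2l => //; rewrite (bigD1 i) //= lerDl sumr_ge0.
Qed.

Lemma enorm_ball_box m (c z : 'rV[R]_m) e : \sum_j `|z 0 j - c 0 j| < e ->
  exists2 r : R, 0 < r & forall y : 'rV[R]_m,
    (forall j, `|y 0 j - z 0 j| <= r) -> enorm (y - c) < e.
Proof.
set D := \sum_j _ => De; pose r := (e - D) / (m.+1)%:R.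
have r0 : 0 < r by rewrite divr_gt0 ?subr_gt0.
exists r => // y yz; apply: le_lt_trans (enorm_le_l1 _) _.
have : \sum_j `|(y - c) 0 j| <= r * m%:R + D.
  rewrite -[r * m%:R](_ : \sum_(j < m) r = _); last by rewrite sumr_const card_ord mulr_natr.
  rewrite /D -big_split; apply: ler_sum => j _ /=.
  by rewrite !mxE -[y 0 j](subrK (z 0 j)) -addrA (le_trans (ler_normD _ _)) // lerD.
have : r * m%:R < e - D.
  by rewrite /r mulrAC ltr_pdivrMr ?ltr0Sn // ltr_pM2l ?subr_gt0 // ltr_nat.
lra.
Qed.

End EuclideanNorm.

Section AffineFaces.
Variable R : realType.

Lemma affine_coord_continuous m n (o : 'rV[R]_n) (fr : 'M[R]_(m, n)) j (z : 'rV[R]_m) :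
  {for z, continuous (fun t : 'rV[R]_m => (o + t *m fr) 0 j)}.
Proof.
rewrite (_ : (fun t => _) = fun t : 'rV[R]_m => o 0 j + \sum_k t 0 k * fr k j); last first.
  by apply/funext => t; rewrite !mxE.
apply: continuousD; first exact: cst_continuous.
apply: continuous_sum => k; apply: continuousM; first exact: coord_continuous.
exact: cst_continuous.
Qed.

Lemma orthonormal_param_bounded m n (o : 'rV[R]_n) (fr : 'M[R]_(m, n))
    (Fs : set 'rV[R]_n) M :
  0 <= M -> fr *m fr^T = 1%:M -> (forall x, Fs x -> forall k, `|x 0 k| <= M) ->
  exists2 B : R, 0 <= B &
    forall y : 'rV[R]_m, Fs (o + y *m fr) -> forall j, `|y 0 j| <= B.
Proof.
move=> M0 orth FM; pose b j := \sum_k (M + `|o 0 k|) * `|fr j k|.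
have b0 j : 0 <= b j by apply: sumr_ge0 => k _; rewrite mulr_ge0 // addr_ge0.
exists (\sum_j b j) => [|y Fy j]; first exact: sumr_ge0.
apply: le_trans (_ : b j <= _); last by rewrite (bigD1 j) //= lerDl sumr_ge0.
have -> : y = (o + y *m fr - o) *m fr^T by rewrite addrC addKr -mulmxA orth mulmx1.
move: (o + y *m fr) Fy => X FX; rewrite mxE.
apply: le_trans (ler_norm_sum _ _ _) _; apply: ler_sum => k _.
rewrite normrM !mxE; apply: ler_wpM2r => //.
by apply: le_trans (ler_normD _ _) _; rewrite normrN lerD // FM.
Qed.

(* The candidate parameters [rho / (j + 1)] are [size P] distinct numbers,
   too many to all be roots of the nonzero polynomial [P] of the segment. *)
Lemma poly_fun_segment_nonroot n l (q : 'rV[R]_n -> R) (x0 x : 'rV[R]_n) rho :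
  poly_fun l q -> q x != 0 -> 0 < rho ->
  exists2 t : R, 0 < t <= rho & q (x0 + t *: (x - x0)) != 0.
Proof.
move=> ql qx rho0; have [P PE] := poly_fun_line x0 (x - x0) ql.
have P1 : P.[1] != 0 by rewrite -PE scale1r addrC subrK.
have P0 : P != 0 by apply: contraNneq P1 => ->; rewrite horner0.
pose ts := [seq rho / (j.+1)%:R | j <- iota 0 (size P)].
have /hasP [_ /mapP [j _ ->] Pt] : has (predC (root P)) ts.
  rewrite has_predC; apply/negP => ts_roots.
  have ts_uniq : uniq ts.
    rewrite map_inj_uniq ?iota_uniq // => a b /(mulfI (lt0r_neq0 rho0)) /invr_inj.
    by move=> /eqP; rewrite eqr_nat eqSS => /eqP.
  by have := max_poly_roots P0 ts_roots ts_uniq; rewrite size_map size_iota ltnn.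
exists (rho / (j.+1)%:R); last by rewrite PE.
rewrite divr_gt0 ?ltr0Sn //= ler_pdivrMr ?ltr0Sn // ler_peMr ?ler1n //; exact: ltW.
Qed.

Lemma face_iint_sqr_eq0 m n (o : 'rV[R]_n) (fr : 'M[R]_(m, n)) (Fs : set 'rV[R]_n)
    (q : 'rV[R]_n -> R) l M :
  poly_fun l q -> 0 <= M -> fr *m fr^T = 1%:M ->
  (forall x, Fs x -> forall k, `|x 0 k| <= M) ->
  (forall x, Fs x -> exists y, x = o + y *m fr) ->
  (exists x0, exists2 e0 : R, 0 < e0 &
     forall y : 'rV[R]_m, enorm y < e0 -> Fs (x0 + y *m fr)) ->
  iint (fun y => \1_Fs (o + y *m fr) * (q (o + y *m fr) * q (o + y *m fr))) = 0 ->
  forall x, Fs x -> q x = 0.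
Proof.
move=> ql M0 orth FM Fpl [x0 [e0 e00 Fball]] H0 x Fx; apply/eqP; apply: contraT => qx.
have [y0 x0E] : exists y0, x0 = o + y0 *m fr.
  by apply: Fpl; have := Fball 0; rewrite enorm0 mul0mx addr0; apply.
have [y1 xE] := Fpl x Fx.
pose D := \sum_j `|y1 0 j - y0 0 j|.
have D0 : 0 <= D by apply: sumr_ge0.
have rho0 : 0 < e0 / (D + 1) by rewrite divr_gt0 // ltr_pwDr.
have [t /andP[t0 t_rho] qt] := poly_fun_segment_nonroot x0 ql qx rho0.
pose z := y0 + t *: (y1 - y0).
have zE : o + z *m fr = x0 + t *: (x - x0).
  by rewrite x0E xE /z mulmxDl -scalemxAl mulmxBl addrA opprD addrACA subrr add0r.
have [r r0 box] : exists2 r : R, 0 < r & forall y : 'rV[R]_m,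
    (forall j, `|y 0 j - z 0 j| <= r) -> enorm (y - y0) < e0.
  apply: enorm_ball_box; rewrite (_ : \sum_j _ = t * D); last first.
    rewrite mulr_sumr; apply: eq_bigr => j _.
    by rewrite !mxE addrAC subrr add0r normrM gtr0_norm.
  apply: le_lt_trans (ler_wpM2r D0 t_rho) _.
  by rewrite mulrAC ltr_pdivrMr ?ltr_pwDr // ltr_pM2l // ltrDl.
have [B B0 SB] := orthonormal_param_bounded o M0 orth FM.
have [K HK] := poly_fun_bounded ql M0.
have : 0 < iint (fun y => \1_Fs (o + y *m fr) * (q (o + y *m fr) * q (o + y *m fr))).
  rewrite (_ : (fun y => _) = fun y => \1_[set y | Fs (o + y *m fr)] y *
      (q (o + y *m fr) * q (o + y *m fr))); last first.
    by apply/funext => y; rewrite !indicE.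
  apply: (iint_indic_sqr_gt0 (z := z) B0 SB (fun y Sy => HK _ (FM _ Sy))).
  - by apply: poly_fun_comp_continuous ql => j; exact: affine_coord_continuous.
  - by rewrite zE.
  by exists r => // y /box /Fball; rewrite x0E mulmxBl -addrA [_ *m fr + _]addrC subrK.
by rewrite H0 ltxx.
Qed.

End AffineFaces.

Section L2Projection.
Variables (R : realType) (m : nat) (X : set 'rV[R]_m) (I : ('rV[R]_m -> R) -> R).

Definition is_L2proj l (f g : 'rV[R]_m -> R) : Prop :=
  poly_fun l g /\ forall q, poly_fun l q -> I (fun x => (f x - g x) * q x) = 0.

Definition L2proj l (f : 'rV[R]_m -> R) : 'rV[R]_m -> R :=
  xget (fun=> 0) [set g | is_L2proj l f g].

Hypothesis I_local : forall f f', (forall x, X x -> f x = f' x) -> I f = I f'.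

Lemma L2proj_local l f f' : (forall x, X x -> f x = f' x) -> L2proj l f = L2proj l f'.
Proof.
move=> ff'; rewrite /L2proj; congr xget; apply/funext => g; apply/propext.
have eqI q : I (fun x => (f x - g x) * q x) = I (fun x => (f' x - g x) * q x).
  by apply: I_local => x Xx; rewrite ff'.
by split=> -[gl gq]; split=> // q ql; [rewrite -eqI | rewrite eqI]; exact: gq.
Qed.

Hypothesis I0 : I (fun=> 0) = 0.

Lemma is_L2proj_L2proj l f : poly_fun l f -> is_L2proj l f (L2proj l f).
Proof.
move=> fl; apply: xgetPex; exists f; split=> // q _; rewrite -I0.
by apply: I_local => x _; rewrite subrr mul0r.
Qed.

Hypothesis I_definite : forall l q, poly_fun l q ->
  I (fun x => q x * q x) = 0 -> forall x, X x -> q x = 0.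

Lemma L2proj_id l f : poly_fun l f -> forall x, X x -> L2proj l f x = f x.
Proof.
move=> fl x Xx; have [gl gq] := is_L2proj_L2proj fl.
apply/eqP; rewrite eq_sym -subr_eq0; apply/eqP.
by apply: (I_definite (poly_funB fl gl)) => //; exact/gq/poly_funB.
Qed.

End L2Projection.

Section Element.
Variables (R : realType) (d : nat) (E : element R d).
Hypothesis E_polytopal : polytopal_element E.

Lemma closure_cell_bounded :
  exists2 M : R, 0 <= M & forall x, closure (cell E) x -> forall i, `|x 0 i| <= M.
Proof.
case: E_polytopal => _ [[_ [z Tz] _ [M0 TM]] _ _ _ _].
have M00 : 0 <= M0 by apply: le_trans (TM z Tz); rewrite /enorm sqrtr_ge0.
exists (M0 + 1) => [|x Tx i]; first by rewrite addr_ge0.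
have [y [Ty xy]] := Tx _ (nbhsx_ballx x 1 ltr01).
case: xy => _ /(_ 0 i); rewrite -ball_normE /= distrC => xy.
have := coord_le_enorm y i; have := TM y Ty.
have := ler_normD (y 0 i) (x 0 i - y 0 i); rewrite addrC subrK distrC; lra.
Qed.

Lemma intT_local f f' : (forall x, cell E x -> f x = f' x) -> intT E f = intT E f'.
Proof.
move=> ff'; rewrite /intT; congr iint; apply/funext => x.
by rewrite indicE; have [/set_mem/ff'->|_] := boolP (x \in cell E); rewrite ?mul0r.
Qed.

Lemma intF_local i f f' : (forall x, fset E i x -> f x = f' x) -> intF i f = intF i f'.
Proof.
move=> ff'; rewrite /intF; congr iint; apply/funext => y /=.
by rewrite indicE; have [/set_mem/ff'->|_] := boolP (_ \in fset E i); rewrite ?mul0r.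
Qed.

Lemma intT0 : intT E (fun=> 0) = 0.
Proof.
by rewrite /intT -[RHS](iint0 R d); congr iint; apply/funext => x; rewrite mulr0.
Qed.

Lemma intF0 (i : 'I_(nf E)) : intF i (fun=> 0) = 0.
Proof.
by rewrite /intF -[RHS](iint0 R d.-1); congr iint; apply/funext => x; rewrite mulr0.
Qed.

Lemma intT_sqr_eq0 l q : poly_fun l q -> intT E (fun x => q x * q x) = 0 ->
  forall x, cell E x -> q x = 0.
Proof.
move=> ql q0 x Tx; apply/eqP; apply: contraT => qx.
have [M M0 TM] := closure_cell_bounded.
have [K qK] := poly_fun_bounded ql M0.
have Tbd y : cell E y -> forall i, `|y 0 i| <= M by move=> Ty; apply/TM/subset_closure.
have : 0 < intT E (fun x => q x * q x).
  have qc : {for x, continuous q}.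
    apply: (poly_fun_comp_continuous (h := id)) ql => i.
    exact: (@coord_continuous R 1 d 0 i x).
  apply: (iint_indic_sqr_gt0 M0 Tbd (fun y Ty => qK _ (Tbd _ Ty)) qc qx).
  case: E_polytopal => _ [[oT _ _ _] _ _ _ _].
  exact/nbhs_box/open_nbhs_nbhs.
by rewrite q0 ltxx.
Qed.

Lemma intF_sqr_eq0 i l q : poly_fun l q -> intF i (fun x => q x * q x) = 0 ->
  forall x, fset E i x -> q x = 0.
Proof.
move=> ql; have [M M0 TM] := closure_cell_bounded.
case: E_polytopal => _ [_ /(_ i) [orth _ _ [Fplane _ _ relint]] bdT _ _].
apply: (face_iint_sqr_eq0 ql M0 orth).
- move=> x Fx; apply: TM.
  have : (\bigcup_(j in [set: 'I_(nf E)]) fset E j) x by exists i.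
  by rewrite -bdT => -[].
- by move=> x /Fplane [y _ <-]; exists y.
- by case: relint => x0 rx0; exists x0.
Qed.

Lemma pT_local k (v v' : hho E) :
  (forall x, cell E x -> v.1 x = v'.1 x) ->
  (forall i x, fset E i x -> v.2 i x = v'.2 i x) -> pT k v = pT k v'.
Proof.
move=> vT vF; rewrite /pT; congr xget; apply/funext => p; apply/propext.
have eqT w : intT E (fun x => v.1 x * lap w x) = intT E (fun x => v'.1 x * lap w x).
  by apply: intT_local => x Tx; rewrite vT.
have eqF w : \sum_(i < nf E) intF i (fun x => v.2 i x * edot (grad w x) (fnormal E i)) =
    \sum_(i < nf E) intF i (fun x => v'.2 i x * edot (grad w x) (fnormal E i)).
  by apply: eq_bigr => i _; apply: intF_local => x Fx; rewrite vF.
have eqM : intT E (fun x => p x - v.1 x) = intT E (fun x => p x - v'.1 x).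
  by apply: intT_local => x Tx; rewrite vT.
split=> -[pk pw pm]; split=> // [w wk|].
- by rewrite pw // eqT eqF.
- by rewrite -eqM.
- by rewrite pw // -eqT -eqF.
- by rewrite eqM.
Qed.

Lemma same_residuals_agree k (v v' : hho E) :
  (forall x, cell E x -> v.1 x = v'.1 x) ->
  (forall i x, fset E i x -> v.2 i x = v'.2 i x) -> same_residuals k v v'.
Proof.
move=> vT vF; rewrite /same_residuals /deltaT /deltaTF (pT_local k vT vF); split.
  by move=> x Tx; congr (_ x); apply: (L2proj_local (@intT_local)) => y Ty; rewrite vT.
by move=> i x Fx; congr (_ x); apply: (L2proj_local (@intF_local i)) => y Fy; rewrite vF.
Qed.

End Element.

Definition cell_trace {R : realType} {d : nat} {E : element R d} (u : hho E) : hho E :=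
  (u.1, fun=> u.1).

Section Stabilisation.
Variables (R : realType) (d : nat) (E : element R d) (k : nat).

Lemma hho_cell_trace_bdiff (u : hho E) :
  u = hho_add (hho_scale 1 (cell_trace u)) (zero_bdiff u).
Proof.
case: u => u1 u2; congr pair; apply/funext => x /=; first by rewrite mul1r addr0.
by apply/funext => y; rewrite mul1r addrC subrK.
Qed.

Lemma inU_cell_trace (u : hho E) : inU k u -> inU k (cell_trace u).
Proof. by case. Qed.

Lemma inU_zero_bdiff (u : hho E) : inU k u -> inU k (zero_bdiff u).
Proof. by case=> u1 u2; split=> [|i]; [exact: poly_fun0 | exact: poly_funB]. Qed.

Hypothesis E_polytopal : polytopal_element E.

Lemma same_residuals_interp_cell_trace (u : hho E) : inU k u ->
  inU k (interp E k u.1) /\ same_residuals k (interp E k u.1) (cell_trace u).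
Proof.
case=> u1k _; split.
  split=> [|i]; first exact: (is_L2proj_L2proj (@intT_local _ _ E) (intT0 E) u1k).1.
  exact: (is_L2proj_L2proj (@intF_local _ _ E i) (intF0 i) u1k).1.
apply: same_residuals_agree => [x Tx|i x Fx] /=.
  exact: (L2proj_id (@intT_local _ _ E) (intT0 E) (intT_sqr_eq0 E_polytopal)).
exact: (L2proj_id (@intF_local _ _ E i) (intF0 i) (intF_sqr_eq0 E_polytopal (i := i))).
Qed.

Lemma stab_cell_trace_eq0 (s : hho E -> hho E -> R) :
  S3 k s -> residual_dependent k s ->
  forall u w, inU k u -> inU k w -> s (cell_trace u) w = 0.
Proof.
move=> s3 rd u w uk wk; have [Iu Iu_res] := same_residuals_interp_cell_trace uk.
have w_res : same_residuals k w w by [].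
rewrite -(rd _ _ w w Iu (inU_cell_trace uk) wk wk Iu_res w_res).
by apply: s3 => //; apply: poly_funS; case: uk.
Qed.

End Stabilisation.

Theorem proposition3 (R : realType) (d : nat) (E : element R d) (k : nat)
    (s : hho E -> hho E -> R) :
  polytopal_element E ->
  bilinear_on k s -> S1 k s -> S2 k s -> S3 k s ->
  residual_dependent k s ->
  forall u v : hho E, inU k u -> inU k v ->
    s u v = s (zero_bdiff u) (zero_bdiff v).
Proof.
move=> pE [s_linl s_linr] [s_sym _] _ s3 rd u v uk vk.
have s_trace0 := stab_cell_trace_eq0 pE s3 rd.
have [Tuk Zuk] := (inU_cell_trace uk, inU_zero_bdiff uk).
have [Tvk Zvk] := (inU_cell_trace vk, inU_zero_bdiff vk).
rewrite {1}(hho_cell_trace_bdiff u) s_linl // s_trace0 // mulr0 add0r.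
rewrite {1}(hho_cell_trace_bdiff v) s_linr // s_sym // s_trace0 //.
by rewrite mulr0 add0r.
Qed.
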